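(* Let $\mathfrak g$ be a finite-dimensional simple complex Lie algebra of classical type, $\mathfrak a\subseteq\mathfrak g$ a semisimple Levi subalgebra and $\lambda\in P^+$. If $(\mathfrak a,\lambda)$ is globally admissible, then $(\mathfrak a,\lambda)$ is locally admissible.
   Context: $\mathfrak g$ is a finite-dimensional simple complex Lie algebra of classical type $A_n,B_n,C_n$ or $D_n$ with Cartan subalgebra $\mathfrak h$, roots $R$, fundamental weights $\omega_1,\dots,\omega_n$, dominant integral weights $P^+$; roots are written in the standard coordinates $\varepsilon_i$ (type $B_n$: long $\varepsilon_i\pm\varepsilon_j$, short $\varepsilon_i$; type $C_n$: long $2\varepsilon_i$, short $\varepsilon_i\pm\varepsilon_j$; types $A_n$, $D_n$ as usual). A Levi subalgebra is, for a subset $R'\subseteq R$ closed under addition (within $R$) and under $\alpha\mapsto-\alpha$, $\mathfrak a=\sum_{\alpha\in R'}[\mathfrak g_\alpha,\mathfrak g_{-\alpha}]\oplus\bigoplus_{\alpha\in R'}\mathfrak g_\alpha$; it is semisimple, with Cartan subalgebra $\mathfrak h_{\mathfrak a}\subseteq\mathfrak h$ and positive roots $R'\cap R^+$. For a simple Levi subalgebra $\mathfrak b$ with fundamental weights $\tau_1,\dots,\tau_s$ let $\pi_{\mathfrak b}:\mathfrak h^*\to\mathfrak h_{\mathfrak b}^*$ be restriction. $(\mathfrak b,\omega_k)$ is globally admissible if $\pi_{\mathfrak b}(\omega_k)$ is $0$ or one of $\tau_1,\dots,\tau_s$. $(\mathfrak b,\omega_k)$ is locally non-admissible if either (1) $\mathfrak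 b$ is of type $B_s$, $s>1$, $\varepsilon_i$ is the unique short simple root of $\mathfrak b$, and $i\le k\le n-1$; or (2) $\mathfrak g$ is of type $C_n$, $\mathfrak b$ is of type $A_s$ and $\pi_{\mathfrak b}(\omega_k)\notin\{0,\tau_1,\dots,\tau_s\}$; otherwise locally admissible. For semisimple $\mathfrak a$ and $\lambda=\omega_{i_1}+\dots+\omega_{i_r}$ (with repetition), $(\mathfrak a,\lambda)$ is locally (resp. globally) admissible if $(\mathfrak a_l,\omega_{i_j})$ is locally (resp. globally) admissible for every $j$ and every simple ideal $\mathfrak a_l$ of $\mathfrak a$. *)

From HB Require Import structures.
From mathcomp Require Import all_boot all_order all_algebra.
Set Implicit Arguments. Unset Strict Implicit. Unset Printing Implicit Defensive.
Import Order.TTheory GRing.Theory Num.Theory.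
Local Open Scope ring_scope.

Inductive ctype := TA | TB | TC | TD.

Definition rank_ok (t : ctype) (n : nat) : bool :=
  match t with
  | TA => (1 <= n)%N | TB => (2 <= n)%N | TC => (3 <= n)%N | TD => (4 <= n)%N
  end.

(* ambient coordinate space: R^{n+1} for A_n, R^n otherwise;
   coordinate j : 'I_m stands for eps_{j+1} *)
Definition dimV (t : ctype) (n : nat) : nat := if t is TA then n.+1 else n.
Notation vec t n := 'rV[rat]_(dimV t n).

Definition eps {m : nat} (i : 'I_m) : 'rV[rat]_m := delta_mx 0 i.
Definition dot {m : nat} (u v : 'rV[rat]_m) : rat := \sum_(j < m) u 0 j * v 0 j.

Definition is_pos_root (t : ctype) (n : nat) (a : vec t n) : bool :=
  match t with
  | TA => [exists i : 'I_(dimV t n), exists j : 'I_(dimV t n), (i < j)%N && (a == eps i - eps j)]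
  | TB => [exists i : 'I_(dimV t n), exists j : 'I_(dimV t n), (i < j)%N && ((a == eps i - eps j) || (a == eps i + eps j))]
          || [exists i : 'I_(dimV t n), a == eps i]
  | TC => [exists i : 'I_(dimV t n), exists j : 'I_(dimV t n), (i < j)%N && ((a == eps i - eps j) || (a == eps i + eps j))]
          || [exists i : 'I_(dimV t n), a == eps i *+ 2]
  | TD => [exists i : 'I_(dimV t n), exists j : 'I_(dimV t n), (i < j)%N && ((a == eps i - eps j) || (a == eps i + eps j))]
  end.

Definition is_root (t : ctype) (n : nat) (a : vec t n) : bool :=
  is_pos_root a || is_pos_root (- a).

Definition fund_weight (t : ctype) (n k : nat) : vec t n :=
  \row_(j < dimV t n)
   match t with
   | TA => (if (j < k)%N then 1 else 0) - k%:R / (n.+1)%:R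
   | TB => if (k < n)%N then (if (j < k)%N then 1 else 0) else 1 / 2
   | TC => if (j < k)%N then 1 else 0
   | TD => if (k <= n - 2)%N then (if (j < k)%N then 1 else 0)
           else if k == (n - 1)%N then (if (j < n - 1)%N then 1 / 2 else - (1 / 2))
           else 1 / 2
   end.

(* R' : a set of roots closed under addition within R and under negation;
   it defines the (semisimple) Levi subalgebra a *)
Definition levi_set (t : ctype) (n : nat) (R' : pred (vec t n)) : Prop :=
  [/\ forall a, R' a -> is_root a,
      forall a b, R' a -> R' b -> is_root (a + b) -> R' (a + b)
    & forall a, R' a -> R' (- a)].

Definition nonorth {m : nat} : rel 'rV[rat]_m := fun a b => dot a b != 0.

(* the irreducible component of R' containing a0 (roots of a simple ideal of a):
   b is linked to a0 by a chain of pairwise non-orthogonal roots of R' *)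
Definition comp (t : ctype) (n : nat) (R' : pred (vec t n)) (a0 b : vec t n) : Prop :=
  R' b /\ exists s : seq (vec t n), [/\ all R' s, path nonorth a0 s & last a0 s = b].

Definition simple_root (t : ctype) (n : nat) (C : vec t n -> Prop) (b : vec t n) : Prop :=
  [/\ C b, is_pos_root b &
      ~ (exists g d, [/\ C g, C d, is_pos_root g, is_pos_root d & b = g + d])].

Definition pair_co {m : nat} (l b : 'rV[rat]_m) : rat := 2 * dot l b / dot b b.

(* pi_b(l) is 0 or one of the fundamental weights tau_1..tau_s of b
   (pi_b(l) is determined by its values on the simple coroots of b) *)
Definition zero_or_fund (t : ctype) (n : nat) (C : vec t n -> Prop) (l : vec t n) : Prop :=
  (forall b, simple_root C b -> pair_co l b = 0) \/
  (exists b0, [/\ simple_root C b0, pair_co l b0 = 1 &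
                  forall b, simple_root C b -> b <> b0 -> pair_co l b = 0]).

Definition enum_simple (t : ctype) (n : nat) (C : vec t n -> Prop) (bs : seq (vec t n)) : Prop :=
  uniq bs /\ forall b, simple_root C b <-> b \in bs.

(* Gram matrix of the simple system is (a positive multiple of) that of A_s / B_s
   (for B_s the last simple root is the short one) *)
Definition gram_A {m : nat} (bs : seq 'rV[rat]_m) : Prop :=
  exists c : rat, 0 < c /\ forall i j : nat, (i < size bs)%N -> (j < size bs)%N ->
    dot (nth 0 bs i) (nth 0 bs j) =
      if i == j then 2 * c else if (i.+1 == j) || (j.+1 == i) then - c else 0.

Definition gram_B {m : nat} (bs : seq 'rV[rat]_m) : Prop :=
  exists c : rat, 0 < c /\ forall i j : nat, (i < size bs)%N -> (j < size bs)%N ->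
    dot (nth 0 bs i) (nth 0 bs j) =
      if i == j then (if i == (size bs).-1 then c else 2 * c)
      else if (i.+1 == j) || (j.+1 == i) then - c else 0.

Definition of_type_A (t : ctype) (n : nat) (C : vec t n -> Prop) (s : nat) : Prop :=
  exists bs, [/\ size bs = s, enum_simple C bs & gram_A bs].

Definition of_type_B_with (t : ctype) (n : nat) (C : vec t n -> Prop) (s : nat)
  (bs : seq (vec t n)) : Prop :=
  [/\ size bs = s, enum_simple C bs & gram_B bs].

Definition glob_adm1 (t : ctype) (n : nat) (C : vec t n -> Prop) (k : nat) : Prop :=
  zero_or_fund C (fund_weight t n k).

Definition loc_nonadm1 (t : ctype) (n : nat) (C : vec t n -> Prop) (k : nat) : Prop :=
  (exists s bs, [/\ (1 < s)%N, of_type_B_with C s bs &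
      exists i : 'I_(dimV t n), last 0 bs = eps i /\ (i.+1 <= k <= n - 1)%N])
  \/
  (t = TC /\ (exists s, (0 < s)%N /\ of_type_A C s) /\ ~ zero_or_fund C (fund_weight t n k)).

Definition loc_adm1 (t : ctype) (n : nat) (C : vec t n -> Prop) (k : nat) : Prop :=
  ~ loc_nonadm1 C k.

(* lambda = omega_{k_1} + ... + omega_{k_r}, given by the list ks;
   simple ideals of a  <->  components comp R' a0, a0 in R' *)
Definition glob_adm (t : ctype) (n : nat) (R' : pred (vec t n)) (ks : seq nat) : Prop :=
  forall a0, R' a0 -> forall k, k \in ks -> glob_adm1 (comp R' a0) k.

Definition loc_adm (t : ctype) (n : nat) (R' : pred (vec t n)) (ks : seq nat) : Prop :=
  forall a0, R' a0 -> forall k, k \in ks -> loc_adm1 (comp R' a0) k.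

From mathcomp Require Import all_boot all_order all_algebra.
From mathcomp Require Import lra zify.
Import Order.TTheory GRing.Theory Num.Theory.
Set Implicit Arguments.
Unset Strict Implicit.
Unset Printing Implicit Defensive.
Local Open Scope ring_scope.

(* Global admissibility forces <omega_k, b^vee> to be 0 or 1 on every simple
   root b.  Case (2) of local non-admissibility is literally its negation.  In
   case (1) the short simple root is some eps_i, which is a root only in types
   B and C; there i < k < n makes the i-th coordinate of omega_k equal to 1, so
   <omega_k, eps_i^vee> = 2. *)

Lemma eps_entry m (i j : 'I_m) : eps i 0 j = (j == i)%:R :> rat.
Proof. by rewrite /eps mxE eqxx. Qed.

Lemma dot_eps m (u : 'rV[rat]_m) (i : 'I_m) : dot u (eps i) = u 0 i.
Proof.
rewrite /dot (bigD1 i) //= eps_entry eqxx mulr1 big1 ?addr0 // => j ji.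
by rewrite eps_entry (negbTE ji) mulr0.
Qed.

Lemma pair_co_eps m (u : 'rV[rat]_m) (i : 'I_m) : pair_co u (eps i) = 2 * u 0 i.
Proof. by rewrite /pair_co !dot_eps eps_entry eqxx divr1. Qed.

Lemma eps_neq_subr m (i a b : 'I_m) : a != b -> eps i != eps a - eps b.
Proof.
move=> neq_ab; apply/eqP=> /(congr1 (fun v : 'rV[rat]_m => v 0 b)).
rewrite !mxE /= eqxx (eq_sym b a) (negbTE neq_ab).
by case: (b == i); rewrite /= ?mulr1n ?mulr0n; lra.
Qed.

Lemma eps_neq_addr m (i a b : 'I_m) : a != b -> eps i != eps a + eps b.
Proof.
move=> neq_ab; apply/eqP=> E.
have := congr1 (fun v : 'rV[rat]_m => v 0 a) E.
have := congr1 (fun v : 'rV[rat]_m => v 0 b) E.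
rewrite !mxE /= !eqxx (eq_sym b a) (negbTE neq_ab).
by case: eqVneq => [<-|_]; rewrite ?(negbTE neq_ab) /= ?mulr1n ?mulr0n; lra.
Qed.

Lemma eps_pos_root_BC t n (i : 'I_(dimV t n)) :
  is_pos_root (eps i) -> t = TB \/ t = TC.
Proof.
have off_diag m (a b : 'I_m) : (a < b)%N -> a != b.
  by move=> lt_ab; rewrite neq_ltn lt_ab.
case: t i => i; rewrite /is_pos_root; [| by left | by right |].
- case/existsP=> a /existsP[b /andP[lt_ab /eqP E]].
  by move: (eps_neq_subr i (off_diag _ _ _ lt_ab)); rewrite E eqxx.
- case/existsP=> a /existsP[b /andP[lt_ab /orP[]/eqP E]].
  + by move: (eps_neq_subr i (off_diag _ _ _ lt_ab)); rewrite E eqxx.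
  + by move: (eps_neq_addr i (off_diag _ _ _ lt_ab)); rewrite E eqxx.
Qed.

Lemma fund_weight_BC t n k (j : 'I_(dimV t n)) :
  t = TB \/ t = TC -> (j < k < n)%N -> fund_weight t n k 0 j = 1.
Proof.
by case: t j => j [] // _ /andP[lt_jk lt_kn]; rewrite mxE ?lt_kn lt_jk.
Qed.

Lemma zero_or_fund_pair_co t n (C : vec t n -> Prop) (l b : vec t n) :
  zero_or_fund C l -> simple_root C b -> pair_co l b = 0 \/ pair_co l b = 1.
Proof.
case=> [all0 | [b0 [_ one_b0 others0]]] Cb; first by left; apply: all0.
by have [->|neq_b] := eqVneq b b0; [right | left; apply: others0 => //; exact/eqP].
Qed.

Lemma last_in_nonempty m (bs : seq 'rV[rat]_m) : (0 < size bs)%N -> last 0 bs \in bs.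
Proof. by case: bs => // b bs _; rewrite /= mem_last. Qed.

Lemma glob_adm1_loc_adm1 t n (C : vec t n -> Prop) k :
  glob_adm1 C k -> loc_adm1 C k.
Proof.
move=> adm [[s [bs [lt1s [size_bs [_ simple_bs] _] [i [last_i /andP[lt_ik le_kn]]]]]]
          | [_ [_ not_adm]]]; last exact: not_adm.
have simple_i : simple_root C (eps i).
  by apply/simple_bs; rewrite -last_i last_in_nonempty // size_bs; lia.
have [_ pos_i _] := simple_i.
have BC := eps_pos_root_BC pos_i.
have := zero_or_fund_pair_co adm simple_i.
rewrite pair_co_eps fund_weight_BC //; first by case; lra.
by apply/andP; split; lia.
Qed.

Theorem mainTheorem3 (t : ctype) (n : nat) (R' : pred (vec t n)) (ks : seq nat) :
  rank_ok t n ->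
  levi_set R' ->
  all (fun k => (0 < k <= n)%N) ks ->
  glob_adm R' ks -> loc_adm R' ks.
Proof.
(* the argument is componentwise and needs none of the structural hypotheses *)
move=> _ _ _ adm a0 R'a0 k ks_k.
exact/glob_adm1_loc_adm1/adm.
Qed.
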